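(* Let $I=\{1,2\}$, $A=\{x,y\}$ with $x\ne y$, let $\mathcal C=\mathcal C(I,A,(\rho_i)_{i\in I},(C^a)_{a\in A})$ be a Cartan scheme with $\rho_1(x)=y$, $\rho_1(y)=x$, $\rho_2=\mathrm{id}_A$, and let $\mathcal R=\mathcal R(\mathcal C,(R^a)_{a\in A})$ be a root system of type $\mathcal C$. Then $\mathcal R$ is finite if and only if, up to interchanging $x$ and $y$, one of the following holds: (1) $C^x=C^y$ is of finite type $A_1\times A_1$, $B_2$ or $G_2$, i.e. $c^x_{12}=c^x_{21}=0$ or $c^x_{12}c^x_{21}\in\{2,3\}$; (2) $c^x_{12}=c^y_{12}=-1$, $c^x_{21}=-3$ and $c^y_{21}\in\{-4,-5\}$. In case (1), $R^x=R^y$ is the usual set of roots of the generalized Cartan matrix $C^x=C^y$. In case (2), writing $1^m2^n$ for $m\alpha_1+n\alpha_2$ (exponents $1$ and factors with exponent $0$ omitted), one has, if $c^y_{21}=-4$: $R^x_+=\{1,2,12,12^2,12^3,1^22^3,1^32^4,1^32^5\}$, $R^y_+=\{1,2,12,12^2,12^3,12^4,1^22^3,1^22^5\}$; and if $c^y_{21}=-5$: $R^x_+=\{1,2,12,12^2,12^3,1^22^3,1^32^4,1^32^5,1^42^5,1^42^7,1^52^7,1^52^8\}$, $R^y_+=\{1,2,12,12^2,12^3,12^4,12^5,1^22^3,1^22^5,1^22^7,1^32^7,1^32^8\}$.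
   Context: Let $\{\alpha_i\mid i\in I\}$ be the standard basis of $\mathbb Z^I$; $\mathbb N_0=\{0,1,2,\dots\}$. A generalized Cartan matrix is $C=(c_{ij})_{i,j\in I}\in\mathbb Z^{I\times I}$ with $c_{ii}=2$, $c_{jk}\le0$ for $j\ne k$, and $c_{ij}=0\Rightarrow c_{ji}=0$. A Cartan scheme $\mathcal C=\mathcal C(I,A,(\rho_i)_{i\in I},(C^a)_{a\in A})$ consists of a nonempty set $A$, maps $\rho_i:A\to A$ and generalized Cartan matrices $C^a=(c^a_{jk})_{j,k\in I}$ such that (C1) $\rho_i^2=\mathrm{id}$ and (C2) $c^a_{ij}=c^{\rho_i(a)}_{ij}$ for all $a\in A$, $i,j\in I$. For $i\in I$, $a\in A$ let $\sigma_i^a\in\mathrm{Aut}(\mathbb Z^I)$, $\sigma_i^a(\alpha_j)=\alpha_j-c^a_{ij}\alpha_i$. A root system of type $\mathcal C$ is a family $\mathcal R=\mathcal R(\mathcal C,(R^a)_{a\in A})$ of subsets $R^a\subset\mathbb Z^I$ such that, writing $R^a_+=R^a\cap\mathbb N_0^I$ and $m^a_{i,j}=|R^a\cap(\mathbb N_0\alpha_i+\mathbb N_0\alpha_j)|$, for all $a\in A$, $i,j\in I$: (R1) $R^a=R^a_+\cup(-R^a_+)$; (R2) $R^a\cap\mathbb Z\alpha_i=\{\alpha_i,-\alpha_i\}$; (R3) $\sigma_i^a(R^a)=R^{\rho_i(a)}$; (R4) if $i\neq j$ and $m^a_{i,j}$ is finite then $(\rho_i\rho_j)^{m^a_{i,j}}(a)=a$.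 It is finite if every $R^a$ is finite. *)

From HB Require Import structures.
From mathcomp Require Import all_boot all_order all_algebra.
Set Implicit Arguments. Unset Strict Implicit. Unset Printing Implicit Defensive.
Import Order.TTheory GRing.Theory Num.Theory.
Local Open Scope ring_scope.

Definition zvec (I : finType) := {ffun I -> int}.

Definition alpha (I : finType) (i : I) : zvec I := [ffun j => ((i == j) : nat)%:Z].

Definition nonneg (I : finType) (v : zvec I) : Prop := forall j, 0 <= v j.

Definition is_gcm (I : finType) (c : I -> I -> int) : Prop :=
  [/\ forall i, c i i = 2,
      forall j k, j != k -> c j k <= 0
    & forall i j, c i j = 0 -> c j i = 0].

Definition cartan_scheme (I : finType) (A : Type)
  (rho : I -> A -> A) (C : A -> I -> I -> int) : Prop :=
  [/\ forall a, is_gcm (C a),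
      forall i a, rho i (rho i a) = a
    & forall a i j, C a i j = C (rho i a) i j].

Definition sigma (I : finType) (A : Type) (C : A -> I -> I -> int)
  (i : I) (a : A) (v : zvec I) : zvec I :=
  v - alpha i *~ (\sum_(j : I) C a i j * v j).

Definition root_system (I : finType) (A : Type)
  (rho : I -> A -> A) (C : A -> I -> I -> int) (R : A -> zvec I -> Prop) : Prop :=
  [/\ forall a v, R a v <-> ((R a v /\ nonneg v) \/ (R a (- v) /\ nonneg (- v))),
      forall a i v, (R a v /\ exists k : int, v = alpha i *~ k) <->
                               (v = alpha i \/ v = - alpha i),
      forall a i v, R (rho i a) v <-> exists2 w, R a w & v = sigma C i a w
    & forall a i j, i != j ->
         forall s : seq (zvec I), uniq s ->
         (forall v, v \in s <-> (R a v /\ exists m n : nat, v = alpha i *+ m + alpha j *+ n)) ->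
         iter (size s) (fun b => rho i (rho j b)) a = a].

Definition finite_root_system (I : finType) (A : Type) (R : A -> zvec I -> Prop) : Prop :=
  forall a, exists s : seq (zvec I), forall v, R a v <-> v \in s.

(* The usual (real) roots of a generalized Cartan matrix c: the orbit of the simple
   roots under the Weyl group generated by the simple reflections s_i. *)
Definition refl (I : finType) (c : I -> I -> int) (i : I) (v : zvec I) : zvec I :=
  v - alpha i *~ (\sum_(j : I) c i j * v j).
Definition usual_roots (I : finType) (c : I -> I -> int) (v : zvec I) : Prop :=
  exists (w : seq I) (j : I), v = foldr (refl c) (alpha j) w.

Definition i1 : 'I_2 := @Ordinal 2 0 isT.
Definition i2 : 'I_2 := @Ordinal 2 1 isT.

Definition r12 (m n : nat) : zvec 'I_2 := alpha i1 *+ m + alpha i2 *+ n.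

Definition case1 (A : Type) (C : A -> 'I_2 -> 'I_2 -> int) (u v : A) : Prop :=
  C u = C v /\
  ((C u i1 i2 = 0 /\ C u i2 i1 = 0) \/ C u i1 i2 * C u i2 i1 = 2 \/ C u i1 i2 * C u i2 i1 = 3).

Definition case2 (A : Type) (C : A -> 'I_2 -> 'I_2 -> int) (u v : A) : Prop :=
  [/\ C u i1 i2 = -1, C v i1 i2 = -1, C u i2 i1 = -3 & (C v i2 i1 = -4 \/ C v i2 i1 = -5)].

Definition Rx4 : seq (zvec 'I_2) :=
  [:: r12 1 0; r12 0 1; r12 1 1; r12 1 2; r12 1 3; r12 2 3; r12 3 4; r12 3 5].
Definition Ry4 : seq (zvec 'I_2) :=
  [:: r12 1 0; r12 0 1; r12 1 1; r12 1 2; r12 1 3; r12 1 4; r12 2 3; r12 2 5].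
Definition Rx5 : seq (zvec 'I_2) :=
  [:: r12 1 0; r12 0 1; r12 1 1; r12 1 2; r12 1 3; r12 2 3; r12 3 4; r12 3 5;
      r12 4 5; r12 4 7; r12 5 7; r12 5 8].
Definition Ry5 : seq (zvec 'I_2) :=
  [:: r12 1 0; r12 0 1; r12 1 1; r12 1 2; r12 1 3; r12 1 4; r12 1 5; r12 2 3;
      r12 2 5; r12 2 7; r12 3 7; r12 3 8].

Definition pos_roots_are (A : Type) (R : A -> zvec 'I_2 -> Prop) (a : A)
  (s : seq (zvec 'I_2)) : Prop :=
  forall v, (R a v /\ nonneg v) <-> v \in s.

From mathcomp Require Import all_boot all_order all_algebra.
From mathcomp Require Import zify ring lra.
From Stdlib Require Import FunctionalExtensionality.
From Stdlib Require ClassicalDescription.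

(* Write a = c^x_12 = c^y_12, b = c^x_21 and d = c^y_21. The walk
   x -1-> y -2-> y -1-> x -2-> x composes four simple reflections into an integer
   matrix M of determinant 1 mapping R^x into itself. If R is finite, M has finite
   order, so |tr M| <= 1 or M = +-1; since tr M = (ab - 2)(ad - 2) - 2, this bounds
   a, b, d, and a finite search leaves the listed types together with a = b = d = -1,
   which (R4) excludes because (rho_1 rho_2)^3 x = y.
   Conversely, for each listed type the alternating word of length m = |R^x_+| sends
   both simple roots to negative roots, so every positive root turns negative along
   the word. A simple reflection s_i keeps every positive root other than alpha_i
   positive, hence the positive roots are exactly the roots s_(i_1) ... s_(i_(k-1))
   alpha_(i_k) met along the word, which are computed explicitly. When C^x = C^y,
   these are images of simple roots under reflections of a single Cartan matrix,
   so R^x = R^y is the usual root system. *)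

Set Implicit Arguments. Unset Strict Implicit. Unset Printing Implicit Defensive.
Import Order.TTheory GRing.Theory Num.Theory.
Local Open Scope ring_scope.

Section Reflections.
Variables (I : finType) (c : I -> I -> int).

Lemma refl_opp i v : refl c i (- v) = - refl c i v.
Proof.
apply/ffunP => j; rewrite /refl !ffunE ffunMzE ffunE.
under eq_bigr => k _ do rewrite ffunE mulrN.
by rewrite sumrN mulrNz ffunMzE ffunE opprB opprK addrC.
Qed.

Lemma refl_alpha i : c i i = 2 -> refl c i (alpha i) = - alpha i.
Proof.
move=> cii; rewrite /refl (bigD1 i) //= big1 => [|j /negbTE ji]; last first.
  by rewrite ffunE eq_sym ji mulr0.
by rewrite ffunE eqxx cii addr0 mulr1 -[X in X - _]mulr1z -mulrzBr.
Qed.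

Lemma usual_roots_opp v : (forall i, c i i = 2) -> usual_roots c v -> usual_roots c (- v).
Proof.
move=> cii [w [j ->]]; exists (rcons w j), j; rewrite foldr_rcons refl_alpha //.
by elim: w => //= i w <-; rewrite refl_opp.
Qed.

End Reflections.

Section RootSystems.
Variables (I : finType) (A : Type) (rho : I -> A -> A) (C : A -> I -> I -> int).
Variable R : A -> zvec I -> Prop.
Hypothesis hR : root_system rho C R.

Lemma root_sign a v : R a v -> nonneg v \/ nonneg (- v).
Proof. by case: hR => /(_ a v) h _ _ _ /h [[]|[]]; auto. Qed.

Lemma root_opp a v : R a v -> R a (- v).
Proof.
case: hR => h1 _ _ _ hv; apply/h1.
by case/h1: hv => [[hv nv]|[]]; [right; rewrite opprK|left].
Qed.

Lemma root_alpha a i : R a (alpha i).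
Proof. by case: hR => _ h2 _ _; case: (h2 a i (alpha i)) => _ /(_ (or_introl erefl)) []. Qed.

Lemma root_sigma a i v : R a v -> R (rho i a) (sigma C i a v).
Proof. by case: hR => _ _ h3 _ hv; apply/h3; exists v. Qed.

Lemma root_multiple_alpha a i k :
  R a (alpha i *~ k) -> alpha i *~ k = alpha i \/ alpha i *~ k = - alpha i.
Proof. by case: hR => _ h2 _ _ hv; apply/(h2 a); split=> //; exists k. Qed.

(* [i0] only witnesses that [I] is nonempty: over an empty [I], 0 is a root. *)
Lemma root_neq0 (i0 : I) a v : R a v -> v != 0.
Proof.
move=> hv; apply/eqP => v0; rewrite v0 -(mulr0z (alpha i0)) in hv.
by case: (root_multiple_alpha hv); rewrite mulr0z => /ffunP/(_ i0); rewrite !ffunE eqxx.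
Qed.

Lemma root_sigma_nonneg a i v :
  R a v -> nonneg v -> v != alpha i -> nonneg (sigma C i a v).
Proof.
move=> hv nv nvi; have [//|nn] := root_sign (root_sigma i hv).
have vj j : i != j -> v j = 0.
  move=> /negbTE ij; move: (nn j) (nv j).
  rewrite /sigma !ffunE ffunMzE ffunE ij /= mul0rz subr0; lia.
have ev : v = alpha i *~ v i.
  apply/ffunP => j; rewrite ffunMzE ffunE.
  have [<-|ij] := eqVneq i j; first by rewrite /= mulrzz mul1r.
  by rewrite vj //= mul0rz.
rewrite ev in hv; case: (root_multiple_alpha hv); rewrite -ev => e.
  by rewrite e eqxx in nvi.
by move: (nv i); rewrite e !ffunE eqxx.
Qed.

Lemma root_of_usual_root c a v : (forall i, involutive (rho i)) ->
  (forall b, C b = c) -> usual_roots c v -> R a v.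
Proof.
move=> rhoK Cc [w [j ->]]; elim: w a => [|i w IH] a /=; first exact: root_alpha.
by have := root_sigma i (IH (rho i a)); rewrite rhoK /sigma Cc.
Qed.

End RootSystems.

Definition coords (v : zvec 'I_2) : int * int := (v i1, v i2).
Definition of_coords (p : int * int) : zvec 'I_2 := [ffun j => if j == i1 then p.1 else p.2].

Lemma ord2P (j : 'I_2) : j = i1 \/ j = i2.
Proof. by case: j => [[|[|k]] ltj]; [left; apply: val_inj|right; apply: val_inj|]. Qed.

Lemma coordsK : cancel coords of_coords.
Proof. by move=> v; apply/ffunP => j; rewrite ffunE; case: (ord2P j) => ->. Qed.

Lemma of_coordsK : cancel of_coords coords.
Proof. by case=> p1 p2; rewrite /coords !ffunE. Qed.

Lemma sum_ord2 (F : 'I_2 -> int) : \sum_j F j = F i1 + F i2.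
Proof.
rewrite big_ord_recr big_ord_recr big_ord0 /= add0r.
by congr (F _ + F _); apply: val_inj.
Qed.

Lemma coords_inj : injective coords. Proof. exact: can_inj coordsK. Qed.

Definition unit2 (i : 'I_2) : int * int := if i == i1 then (1, 0) else (0, 1).
Definition nonneg2 (p : int * int) : bool := (0 <= p.1) && (0 <= p.2).
Definition nonpos2 (p : int * int) : bool := (p.1 <= 0) && (p.2 <= 0).

Lemma coords_alpha i : coords (alpha i) = unit2 i.
Proof. by rewrite /coords /unit2 !ffunE; case: (ord2P i) => ->. Qed.

Lemma coords_r12 m n : coords (r12 m n) = (m%:Z, n%:Z).
Proof. by rewrite /coords /r12 !ffunE !ffunMnE !ffunE /=; congr (_, _); lia. Qed.

Lemma coords_opp v : coords (- v) = - coords v.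
Proof. by rewrite /coords !ffunE. Qed.

Lemma nonneg_coords v : nonneg v <-> nonneg2 (coords v).
Proof.
split=> [nv|/andP[nv1 nv2] j]; first by rewrite /nonneg2 !nv.
by case: (ord2P j) => ->.
Qed.

Lemma nonneg_r12 v : (exists m n : nat, v = alpha i1 *+ m + alpha i2 *+ n) <-> nonneg v.
Proof.
split=> [[m [n ->]]|/nonneg_coords/andP[nv1 nv2]].
  by apply/nonneg_coords; rewrite -/(r12 m n) coords_r12.
exists `|v i1|%N, `|v i2|%N; rewrite -/(r12 _ _); apply: coords_inj.
by rewrite coords_r12 !gez0_abs.
Qed.

Definition refl2 (c : 'I_2 -> 'I_2 -> int) (i : 'I_2) (p : int * int) : int * int :=
  if i == i1 then (- p.1 - c i1 i2 * p.2, p.2) else (p.1, - c i2 i1 * p.1 - p.2).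

Lemma coords_refl c i v : c i i = 2 -> coords (refl c i v) = refl2 c i (coords v).
Proof.
move=> cii; rewrite /coords /refl /refl2 !ffunE !ffunMzE !ffunE !sum_ord2 /=.
case: (ord2P i) cii => -> /= cii; rewrite cii; congr (_, _); lia.
Qed.

Lemma of_coords_refl2 c i p :
  c i i = 2 -> of_coords (refl2 c i p) = refl c i (of_coords p).
Proof. by move=> cii; apply: coords_inj; rewrite coords_refl // !of_coordsK. Qed.

Lemma refl2K c i : involutive (refl2 c i).
Proof. by case=> p1 p2; rewrite /refl2; case: eqP => _ /=; congr (_, _); ring. Qed.

Definition mx2 := ((int * int) * (int * int))%type.
Definition mx2_app (M : mx2) (p : int * int) : int * int :=
  (M.1.1 * p.1 + M.1.2 * p.2, M.2.1 * p.1 + M.2.2 * p.2).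
Definition mx2_mul (M N : mx2) : mx2 :=
  ((M.1.1 * N.1.1 + M.1.2 * N.2.1, M.1.1 * N.1.2 + M.1.2 * N.2.2),
   (M.2.1 * N.1.1 + M.2.2 * N.2.1, M.2.1 * N.1.2 + M.2.2 * N.2.2)).
Definition mx2_1 : mx2 := ((1, 0), (0, 1)).
Definition mx2_tr (M : mx2) : int := M.1.1 + M.2.2.
Definition mx2_det (M : mx2) : int := M.1.1 * M.2.2 - M.1.2 * M.2.1.

Lemma mx2_app1 p : mx2_app mx2_1 p = p.
Proof. by case: p => p1 p2; rewrite /mx2_app /=; congr (_, _); ring. Qed.

Lemma mx2_app_mul M N p : mx2_app (mx2_mul M N) p = mx2_app M (mx2_app N p).
Proof. by rewrite /mx2_app /=; congr (_, _); ring. Qed.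

Lemma iter_mx2_app M k p : iter k (mx2_app M) p = mx2_app (iter k (mx2_mul M) mx2_1) p.
Proof. by elim: k => [|k IH] /=; rewrite ?mx2_app1 // IH mx2_app_mul. Qed.

Lemma refl2_mx c i : exists M, refl2 c i =1 mx2_app M.
Proof.
rewrite /refl2; case: eqP => _.
  by exists ((-1, - c i1 i2), (0, 1)) => p; rewrite /mx2_app /=; congr (_, _); ring.
by exists ((1, 0), (- c i2 i1, -1)) => p; rewrite /mx2_app /=; congr (_, _); ring.
Qed.

Lemma mx2_eq1 M : mx2_app M (1, 0) = (1, 0) -> mx2_app M (0, 1) = (0, 1) -> M = mx2_1.
Proof.
case: M => [[m11 m12] [m21 m22]]; rewrite /mx2_app /= => -[e11 e21] [e12 e22].
by rewrite /mx2_1; congr ((_, _), (_, _)); lia.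
Qed.

Fixpoint cheb (t d : int) (k : nat) : int * int :=
  if k is k'.+1 then let: (u, v) := cheb t d k' in (v, t * v - d * u) else (0, 1).

(* By Cayley-Hamilton, M^2 = tr(M) M - det(M) 1. *)
Lemma mx2_pow_cheb M k : let: (u, v) := cheb (mx2_tr M) (mx2_det M) k in
  iter k.+1 (mx2_mul M) mx2_1 =
    ((v * M.1.1 - mx2_det M * u, v * M.1.2), (v * M.2.1, v * M.2.2 - mx2_det M * u)).
Proof.
case: M => [[m11 m12] [m21 m22]]; rewrite /mx2_tr /mx2_det /=.
elim: k => [|k IH] /=; first by rewrite /mx2_mul /=; congr ((_, _), (_, _)); ring.
move: IH; case: (cheb _ _ k) => u v /= ->.
by rewrite /mx2_mul /=; congr ((_, _), (_, _)); ring.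
Qed.

Lemma cheb_growth t k : 2 <= `|t| -> `|(cheb t 1 k).1| < `|(cheb t 1 k).2|.
Proof.
move=> ht; elim: k => [|k] /=; first by rewrite normr0 normr1.
case: (cheb t 1 k) => u v /= IH; rewrite mul1r.
have : `|t * v| <= `|t * v - u| + `|u| by rewrite -[X in `|X|](subrK u) ler_normD.
by rewrite normrM; have := normr_ge0 v; nra.
Qed.

Lemma mx2_finite_order M k : mx2_det M = 1 -> iter k.+1 (mx2_mul M) mx2_1 = mx2_1 ->
  `|mx2_tr M| <= 1 \/ [/\ M.1.2 = 0, M.2.1 = 0 & M.1.1 = M.2.2].
Proof.
move=> det1 Mk1; have [|big] := lerP `|mx2_tr M| 1; [by left | right].
have /(cheb_growth k) : 2 <= `|mx2_tr M| by lia.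
move: (mx2_pow_cheb M k); rewrite det1 Mk1; case: (cheb _ 1 k) => u v /=.
case=> e11 e12 e21 e22 uv; have v0 : v != 0.
  by apply: contraTneq uv => ->; rewrite normr0 -leNgt.
have vM e : v * e = 0 -> e = 0 by move/eqP; rewrite mulf_eq0 (negbTE v0) => /eqP.
split; [exact: vM (esym e12) | exact: vM (esym e21) |].
by apply/eqP; rewrite -subr_eq0; apply/eqP/vM; lia.
Qed.

Section Walks.
Variables (T : Type) (rho : 'I_2 -> T -> T) (C : T -> 'I_2 -> 'I_2 -> int).

Fixpoint walk (t : T) (w : seq 'I_2) (p : int * int) : int * int :=
  if w is i :: w' then walk (rho i t) w' (refl2 (C t) i p) else p.

Fixpoint walk_end (t : T) (w : seq 'I_2) : T :=
  if w is i :: w' then walk_end (rho i t) w' else t.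

Fixpoint word_roots (t : T) (w : seq 'I_2) : seq (int * int) :=
  if w is i :: w' then unit2 i :: map (refl2 (C (rho i t)) i) (word_roots (rho i t) w')
  else [::].

Lemma walk_inj t w : injective (walk t w).
Proof.
elim: w t => [|i w IH] t p q //= /IH.
by move/(congr1 (refl2 (C t) i)); rewrite !refl2K.
Qed.

Lemma walk_mx t w : exists M, walk t w =1 mx2_app M.
Proof.
elim: w t => [|i w IH] t /=; first by exists mx2_1 => p; rewrite mx2_app1.
have [M EM] := IH (rho i t); have [N EN] := refl2_mx (C t) i.
by exists (mx2_mul M N) => p; rewrite EN EM mx2_app_mul.
Qed.

Lemma walk_not_nonneg t w p : (forall i, nonpos2 (walk t w (unit2 i))) ->
  nonneg2 p -> p != 0 -> ~~ nonneg2 (walk t w p).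
Proof.
move=> neg; case: p => p1 p2 /andP[/= p1ge0 p2ge0] nz; apply/negP => nn.
suff /walk_inj e : walk t w (p1, p2) = walk t w (0, 0) by rewrite e in nz.
have [[[m11 m12] [m21 m22]] EM] := walk_mx t w.
move: (neg i1) (neg i2) nn; rewrite /unit2 /= !EM /mx2_app /nonpos2 /nonneg2 /=.
move=> /andP[m11le0 m21le0] /andP[m12le0 m22le0] /andP[q1 q2].
congr (_, _); nra.
Qed.

Lemma word_roots_usual c t w p : (forall t, C t = c) -> (forall i, c i i = 2) ->
  p \in word_roots t w -> usual_roots c (of_coords p).
Proof.
move=> Cc cii; elim: w t p => [|i w IH] t p //=; rewrite inE.
case/orP=> [/eqP ->|/mapP[q /IH [ws [j eq]] ->]].
  by exists [::], i; apply: coords_inj; rewrite of_coordsK coords_alpha.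
by exists (i :: ws), j; rewrite /= -eq Cc of_coords_refl2.
Qed.

End Walks.

Section WalkMorphism.
Variables (T T' : Type) (rho : 'I_2 -> T -> T) (rho' : 'I_2 -> T' -> T').
Variables (C : T -> 'I_2 -> 'I_2 -> int) (C' : T' -> 'I_2 -> 'I_2 -> int) (f : T -> T').
Hypotheses (f_rho : forall i t, f (rho i t) = rho' i (f t)) (f_C : forall t, C' (f t) =2 C t).

Lemma refl2_morph t i p : refl2 (C' (f t)) i p = refl2 (C t) i p.
Proof. by rewrite /refl2 !f_C. Qed.

Lemma walk_morph t w p : walk rho' C' (f t) w p = walk rho C t w p.
Proof. by elim: w t p => [|i w IH] t p //=; rewrite -f_rho IH refl2_morph. Qed.

Lemma word_roots_morph t w : word_roots rho' C' (f t) w = word_roots rho C t w.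
Proof.
elim: w t => [|i w IH] t //=; rewrite -f_rho IH.
by congr (_ :: _); apply: eq_map => p; rewrite refl2_morph.
Qed.

End WalkMorphism.

Section RankTwoPositiveRoots.
Variables (A : Type) (rho : 'I_2 -> A -> A) (C : A -> 'I_2 -> 'I_2 -> int).
Variable R : A -> zvec 'I_2 -> Prop.
Hypotheses (hC : cartan_scheme rho C) (hR : root_system rho C R).

Lemma cartan_diag a i : C a i i = 2.
Proof. by case: hC => /(_ a) []. Qed.

Lemma rhoK i : involutive (rho i).
Proof. by case: hC => _ + _; apply. Qed.

Lemma refl2_rho a i : refl2 (C (rho i a)) i = refl2 (C a) i.
Proof. by case: hC => _ _ C2; rewrite /refl2; case: (ord2P i) => ->; rewrite -!C2. Qed.

Lemma root_refl2 a i p :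
  R a (of_coords p) -> R (rho i a) (of_coords (refl2 (C a) i p)).
Proof. by move/(root_sigma hR i); rewrite of_coords_refl2 ?cartan_diag. Qed.

Lemma root_walk a w p :
  R a (of_coords p) -> R (walk_end rho a w) (of_coords (walk rho C a w p)).
Proof. by elim: w a p => [|i w IH] a p //= /(root_refl2 i)/IH. Qed.

Lemma root_of_word_roots a w p : p \in word_roots rho C a w -> R a (of_coords p).
Proof.
elim: w a p => [|i w IH] a p //=; rewrite inE => /orP[/eqP ->|/mapP[q /IH hq ->]].
  by rewrite -coords_alpha coordsK; apply: (root_alpha hR).
by have := root_refl2 i hq; rewrite rhoK.
Qed.

Lemma word_roots_of_root a w p : R a (of_coords p) -> nonneg2 p ->
  ~~ nonneg2 (walk rho C a w p) -> p \in word_roots rho C a w.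
Proof.
elim: w a p => [|i w IH] a p hp np /=; first by rewrite np.
move=> hw; rewrite inE; case: eqVneq => //= /eqP p_ni.
have nq : nonneg2 (refl2 (C a) i p).
  rewrite -[refl2 _ _ _]of_coordsK of_coords_refl2 ?cartan_diag //; apply/nonneg_coords.
  apply: (root_sigma_nonneg hR hp); first by apply/nonneg_coords; rewrite of_coordsK.
  by apply/eqP => e; apply: p_ni; rewrite -coords_alpha -e of_coordsK.
apply/mapP; exists (refl2 (C a) i p); first exact: IH (root_refl2 i hp) nq hw.
by rewrite refl2_rho refl2K.
Qed.

Lemma positive_roots_word_roots a w :
  (forall i, nonpos2 (walk rho C a w (unit2 i))) -> all nonneg2 (word_roots rho C a w) ->
  forall p, R a (of_coords p) /\ nonneg2 p <-> p \in word_roots rho C a w.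
Proof.
move=> neg pos p; split=> [[hp np]|wp]; last first.
  by split; [exact: root_of_word_roots wp | exact: (allP pos)].
apply: word_roots_of_root => //; apply: walk_not_nonneg => //.
apply: contraNneq (root_neq0 hR i1 hp) => ->.
by apply/eqP/ffunP => j; rewrite !ffunE; case: ifP.
Qed.

End RankTwoPositiveRoots.

(* Entries (a, b, d, m): the Cartan data a = c^x_12 = c^y_12, b = c^x_21,
   d = c^y_21 of a finite type and its number m of positive roots. *)
Definition finite_types : seq (int * int * int * nat) :=
  [:: (0, 0, 0, 2%N); (-1, -2, -2, 4%N); (-2, -1, -1, 4%N); (-1, -3, -3, 6%N); (-3, -1, -1, 6%N);
      (-1, -3, -4, 8%N); (-1, -4, -3, 8%N); (-1, -3, -5, 12%N); (-1, -5, -3, 12%N)].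

Definition finite_type_case (a b d : int) : bool :=
  [|| (b == d) && [|| (a == 0) && (b == 0), a * b == 2 | a * b == 3],
      [&& a == -1, b == -3 & (d == -4) || (d == -5)]
    | [&& a == -1, d == -3 & (b == -4) || (b == -5)]].

Definition small_nonpos : seq int := [:: -5; -4; -3; -2; -1; 0].

Lemma mem_small_nonpos a : -5 <= a <= 0 -> a \in small_nonpos.
Proof. by rewrite !inE; lia. Qed.

Lemma small_nonpos_box (P : int -> int -> int -> bool) a b d :
  all (fun a => all (fun b => all (P a b) small_nonpos) small_nonpos) small_nonpos ->
  -5 <= a <= 0 -> -5 <= b <= 0 -> -5 <= d <= 0 -> P a b d.
Proof.
move=> box /mem_small_nonpos a_small /mem_small_nonpos b_small /mem_small_nonpos d_small.
by move/allP: box => /(_ a a_small)/allP/(_ b b_small)/allP/(_ d d_small).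
Qed.

Lemma finite_types_case :
  all (fun t => finite_type_case t.1.1 t.1.2 t.2) (unzip1 finite_types).
Proof. by []. Qed.

Lemma finite_type_case_finite a b d : a <= 0 -> b <= 0 -> d <= 0 ->
  finite_type_case a b d -> (a, b, d) \in unzip1 finite_types.
Proof.
move=> ale0 ble0 dle0 hcase.
have bounds : -5 <= a /\ -5 <= b /\ -5 <= d.
  case/or3P: hcase => [/andP[/eqP <- hab]|/and3P[/eqP -> /eqP -> ]|/and3P[/eqP -> /eqP ->]];
    [|by case/orP => /eqP -> ..].
  have [a0|a0] := eqVneq a 0; first by move: hab; rewrite a0 mul0r; lia.
  have [b0|b0] := eqVneq b 0; first by move: hab; rewrite b0 mulr0; lia.
  have : 0 <= (a + 1) * (b + 1) by rewrite mulr_le0; lia.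
  by move: hab; lia.
case: bounds => age [bge dge]; move: hcase; apply/implyP.
pose P a b d := finite_type_case a b d ==> ((a, b, d) \in unzip1 finite_types).
by apply: (@small_nonpos_box P a b d) => //; lia.
Qed.

Lemma product_bounds (u v : int) : 1 <= u -> 1 <= v ->
  `|(u - 2) * (v - 2) - 2| <= 1 -> u <= 5 /\ v <= 5.
Proof.
suff bound (u' v' : int) : 1 <= v' -> 1 <= (u' - 2) * (v' - 2) <= 3 -> u' <= 5.
  move=> u1 v1; rewrite ler_norml => /andP[lo hi].
  by split; [apply: (bound u v) | apply: (bound v u)]; lia.
by move=> v1 /andP[lo hi]; have [v2|v3] := lerP v' 2; nia.
Qed.

Lemma cartan_data_classification (a b d : int) : a <= 0 -> b <= 0 -> d <= 0 ->
  (a = 0 <-> b = 0) -> (a = 0 <-> d = 0) ->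
  `|(a * b - 2) * (a * d - 2) - 2| <= 1 \/ (a * (a * d - 2) = 0 /\ b * (a * d - 1) = d) ->
  (a, b, d) = (-1, -1, -1) \/ (a, b, d) \in unzip1 finite_types.
Proof.
move=> ale0 ble0 dle0 ab0 ad0 hyp.
have [a0|anz] := eqVneq a 0; first by right; rewrite a0 (proj1 ab0 a0) (proj1 ad0 a0).
have b1 : b <= -1.
  have : b <> 0 by move/ab0/eqP; rewrite (negbTE anz).
  lia.
have d1 : d <= -1.
  have : d <> 0 by move/ad0/eqP; rewrite (negbTE anz).
  lia.
have a1 : a <= -1 by lia.
have [age [bge dge]] : -5 <= a /\ -5 <= b /\ -5 <= d.
  case: hyp => [tr|[h12 h21]].
    have [ab5 ad5] : a * b <= 5 /\ a * d <= 5 by apply: product_bounds tr; nia.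
    nia.
  have ad2 : a * d = 2.
    by move/eqP: h12; rewrite mulf_eq0 (negbTE anz) subr_eq0 => /eqP.
  by rewrite ad2 in h21; nia.
pose cond (a b d : int) := [&& a <= -1, b <= -1, d <= -1 &
  (`|(a * b - 2) * (a * d - 2) - 2| <= 1) || (a * (a * d - 2) == 0) && (b * (a * d - 1) == d)].
pose P (a b d : int) :=
  cond a b d ==> ((a, b, d) == (-1, -1, -1)) || ((a, b, d) \in unzip1 finite_types).
have hcond : cond a b d by rewrite /cond a1 b1 d1; case: hyp => [->|[-> ->]]; rewrite ?eqxx ?orbT.
suff /implyP/(_ hcond)/orP[/eqP|] : P a b d by auto.
by apply: (@small_nonpos_box P a b d) => //; lia.
Qed.

Lemma iter_periodic (T : eqType) (f : T -> T) (s : seq T) e :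
  injective f -> {in s, forall z, f z \in s} -> e \in s ->
  exists2 n, (0 < n)%N & iter n f e = e.
Proof.
move=> finj fs es; pose traj := [seq iter k f e | k <- iota 0 (size s).+1].
have sub : {subset traj <= s} by move=> _ /mapP[k _ ->]; elim: k => //= k; apply: fs.
have : ~~ uniq traj.
  by apply/negP => /uniq_leq_size/(_ sub); rewrite size_map size_iota ltnn.
case/(uniqPn e) => i [j [ltij]]; rewrite size_map size_iota => ltj.
rewrite !(nth_map 0%N) ?size_iota ?(ltn_trans ltij) // !nth_iota ?(ltn_trans ltij) //.
rewrite !add0n => eij; exists (j - i)%N; first by rewrite subn_gt0.
have : iter i f e = iter i f (iter (j - i) f e) by rewrite -iterD subnKC ?(ltnW ltij).
by move: (iter (j - i) f e) => x; clear -finj; elim: i => [|i IH] /=; [exact: esym | move/finj/IH].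
Qed.

Lemma finite_of_sub_seq (T : eqType) (P : T -> Prop) (s : seq T) :
  (forall v, P v -> v \in s) -> exists s' : seq T, forall v, P v <-> v \in s'.
Proof.
move=> Ps; exists [seq v <- s | is_left (ClassicalDescription.excluded_middle_informative (P v))].
move=> v; rewrite mem_filter; case: ClassicalDescription.excluded_middle_informative => /=.
  by move=> Pv; split=> // _; exact: Ps.
by move=> nPv; split.
Qed.

(* The Cartan scheme with objects false, true standing for x, y, and Cartan data
   (a, b, d) as in [finite_types]. *)
Definition rho2 (i : 'I_2) (o : bool) : bool := if i == i1 then ~~ o else o.

Definition cartan2 (a b d : int) (o : bool) (i j : 'I_2) : int :=
  if i == j then 2 else if i == i1 then a else if o then d else b.

Definition alternating (m : nat) : seq 'I_2 := [seq if odd k then i2 else i1 | k <- iota 0 m].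

Definition alternating_roots_ok (a b d : int) (m : nat) : bool :=
  all (fun o => all (fun i => nonpos2 (walk rho2 (cartan2 a b d) o (alternating m) (unit2 i)))
                    [:: i1; i2]
                && all nonneg2 (word_roots rho2 (cartan2 a b d) o (alternating m)))
      [:: false; true].

Lemma finite_types_ok :
  all (fun t => alternating_roots_ok t.1.1.1 t.1.1.2 t.1.2 t.2) finite_types.
Proof. by vm_compute. Qed.

Lemma finite_types_alternating a b d :
  (a, b, d) \in unzip1 finite_types -> exists m, alternating_roots_ok a b d m.
Proof.
by case/mapP => -[[[a' b'] d'] m] /(allP finite_types_ok) ok [-> -> ->]; exists m.
Qed.

Definition coxeter_mx (a b d : int) : mx2 :=
  ((1 - a * d, 2 * a - a * a * d),
   (a * b * d - b - d, a * a * b * d - 2 * a * b - a * d + 1)).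

Section TwoObjects.
Variables (A : Type) (x y : A) (rho : 'I_2 -> A -> A) (C : A -> 'I_2 -> 'I_2 -> int).
Variable R : A -> zvec 'I_2 -> Prop.
Hypotheses (hxy : x <> y) (hA : forall a, a = x \/ a = y) (hC : cartan_scheme rho C).
Hypotheses (hrx : rho i1 x = y) (hry : rho i1 y = x) (hr2 : forall a, rho i2 a = a).
Hypothesis hR : root_system rho C R.

Local Notation cx12 := (C x i1 i2).
Local Notation cx21 := (C x i2 i1).
Local Notation cy21 := (C y i2 i1).
Local Notation model := (cartan2 cx12 cx21 cy21).

Let obj (o : bool) : A := if o then y else x.

Lemma cartan_y12 : C y i1 i2 = cx12.
Proof. by case: hC => _ _ C2; rewrite -hrx -C2. Qed.

Lemma rho_obj i o : obj (rho2 i o) = rho i (obj o).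
Proof. by rewrite /rho2; case: (ord2P i) => ->; case: o; rewrite /= ?hrx ?hry ?hr2. Qed.

Lemma cartan_obj o : C (obj o) =2 model o.
Proof.
move=> i j; rewrite /cartan2; case: eqP => [<-|/eqP ij]; first by rewrite (cartan_diag hC).
by case: (ord2P i) (ord2P j) ij => -> [] -> //; case: o; rewrite /= ?cartan_y12.
Qed.

Lemma positive_roots_alternating m o p : alternating_roots_ok cx12 cx21 cy21 m ->
  R (obj o) (of_coords p) /\ nonneg2 p <-> p \in word_roots rho2 model o (alternating m).
Proof.
move=> /allP/(_ o)/(_ _)/andP[]; first by case: o.
rewrite -(word_roots_morph rho_obj cartan_obj) => neg pos.
apply: (positive_roots_word_roots hC hR _ pos) => i.
by rewrite (walk_morph rho_obj cartan_obj); apply: (allP neg); case: (ord2P i) => ->.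
Qed.

Lemma obj_surj a : exists o, a = obj o.
Proof. by case: (hA a) => ->; [exists false | exists true]. Qed.

Lemma finite_of_alternating m :
  alternating_roots_ok cx12 cx21 cy21 m -> finite_root_system R.
Proof.
move=> ok a; have [o ->] := obj_surj a.
pose L := word_roots rho2 model o (alternating m).
apply: (@finite_of_sub_seq _ _ (map of_coords (L ++ map -%R L))) => v hv.
rewrite -[v]coordsK (mem_map (can_inj of_coordsK)) mem_cat.
have pos u : R (obj o) u -> nonneg u -> coords u \in L.
  by move=> hu nu; apply/(positive_roots_alternating _ _ ok); rewrite coordsK -nonneg_coords.
case: (root_sign hR hv) => nv; first by rewrite pos.
apply/orP; right; rewrite -[coords v]opprK -coords_opp map_f // pos //.
exact (root_opp hR hv).
Qed.

Lemma not_A2 : (cx12, cx21, cy21) <> (-1, -1, -1).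
Proof.
case=> a1 b1 d1.
have ok : alternating_roots_ok cx12 cx21 cy21 3 by rewrite a1 b1 d1; vm_compute.
have pos p := @positive_roots_alternating 3 false p ok; rewrite a1 b1 d1 in pos.
pose L := word_roots rho2 (cartan2 (-1) (-1) (-1)) false (alternating 3).
case: hR => _ _ _ /(_ x i1 i2 isT (map of_coords L)).
rewrite (map_inj_uniq (can_inj of_coordsK)) size_map => /(_ isT) R4.
have : iter 3 (fun b => rho i1 (rho i2 b)) x = x.
  apply: R4 => v; rewrite nonneg_r12 -[v]coordsK (mem_map (can_inj of_coordsK)).
  by rewrite -pos coordsK -nonneg_coords.
by rewrite /= !hr2 hrx hry hrx; apply: nesym.
Qed.

Lemma cartan_data_signs : [/\ cx12 <= 0, cx21 <= 0, cy21 <= 0,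
  cx12 = 0 <-> cx21 = 0 & cx12 = 0 <-> cy21 = 0].
Proof.
case: hC => gcm _ _; have [_ x_le0 x_sym] := gcm x; have [_ y_le0 y_sym] := gcm y.
split; [exact: x_le0 | exact: x_le0 | exact: y_le0 | split; apply: x_sym |].
by rewrite -cartan_y12; split; apply: y_sym.
Qed.

Lemma walk_coxeter :
  walk rho C x [:: i1; i2; i1; i2] =1 mx2_app (coxeter_mx cx12 cx21 cy21).
Proof.
case=> p1 p2; rewrite /= hrx hr2 hry /refl2 /= cartan_y12 /mx2_app /=.
by congr (_, _); ring.
Qed.

Lemma walk_end_coxeter : walk_end rho x [:: i1; i2; i1; i2] = x.
Proof. by rewrite /= hrx !hr2 hry. Qed.

Lemma coxeter_finite_order : finite_root_system R ->
  exists k, iter k.+1 (mx2_mul (coxeter_mx cx12 cx21 cy21)) mx2_1 = mx2_1.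
Proof.
move=> /(_ x) [s hs]; set w := [:: i1; i2; i1; i2].
have closed : {in map coords s, forall p, walk rho C x w p \in map coords s}.
  move=> _ /mapP[v /hs hv ->]; apply/mapP; exists (of_coords (walk rho C x w (coords v))).
    apply/hs; have := @root_walk _ _ _ _ hC hR x w (coords v).
    by rewrite coordsK walk_end_coxeter; apply.
  by rewrite of_coordsK.
have unit_in i : unit2 i \in map coords s.
  by apply/mapP; exists (alpha i); [apply/hs; exact (root_alpha hR x i) | rewrite coords_alpha].
have [n1 n1gt0 e1] := iter_periodic (@walk_inj _ rho C x w) closed (unit_in i1).
have [n2 n2gt0 e2] := iter_periodic (@walk_inj _ rho C x w) closed (unit_in i2).
exists (n1 * n2).-1; rewrite prednK ?muln_gt0 ?n1gt0 //.
have iter_coxeter k p : iter k (walk rho C x w) p =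
    mx2_app (iter k (mx2_mul (coxeter_mx cx12 cx21 cy21)) mx2_1) p.
  by rewrite -iter_mx2_app; apply: (eq_iter walk_coxeter).
apply: mx2_eq1; rewrite -iter_coxeter.
  by rewrite mulnC iterM iter_fix.
by rewrite iterM iter_fix.
Qed.

Lemma finite_data : finite_root_system R -> (cx12, cx21, cy21) \in unzip1 finite_types.
Proof.
move=> /coxeter_finite_order [k Mk].
have det1 : mx2_det (coxeter_mx cx12 cx21 cy21) = 1 by rewrite /mx2_det /=; ring.
have [ale0 ble0 dle0 ab0 ad0] := cartan_data_signs.
suff /(cartan_data_classification ale0 ble0 dle0 ab0 ad0) [/not_A2 []|//] :
  `|(cx12 * cx21 - 2) * (cx12 * cy21 - 2) - 2| <= 1 \/
  (cx12 * (cx12 * cy21 - 2) = 0 /\ cx21 * (cx12 * cy21 - 1) = cy21).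
case: (mx2_finite_order det1 Mk) => [tr|[/= m12 m21 _]]; [left|right].
  by move: tr; rewrite /mx2_tr /=; congr (`|_| <= _); ring.
by split; lia.
Qed.

Lemma cartan_eq : cx21 = cy21 -> C x = C y.
Proof.
move=> bd; apply: functional_extensionality => i; apply: functional_extensionality => j.
by move: (cartan_obj false i j) (cartan_obj true i j); rewrite /= /cartan2 bd => -> ->.
Qed.

Lemma cases_finite_type :
  case1 C x y \/ case2 C x y \/ case2 C y x <-> finite_type_case cx12 cx21 cy21.
Proof.
rewrite /case1 /case2 cartan_y12 /finite_type_case; split.
  case=> [[/(congr1 (fun c => c i2 i1)) -> ]|[[-> _ -> ]|[_ -> -> ]]]; lia.
case/or3P=> [/andP[/eqP bd h]|h|h]; [left|right; left|right; right]; try by split; lia.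
by split; [exact: cartan_eq | lia].
Qed.

Lemma finite_cases : finite_root_system R -> case1 C x y \/ case2 C x y \/ case2 C y x.
Proof. by move=> /finite_data/(allP finite_types_case) ok; apply/cases_finite_type. Qed.

Lemma finite_type_alternating : finite_type_case cx12 cx21 cy21 ->
  exists m, alternating_roots_ok cx12 cx21 cy21 m.
Proof.
have [ale0 ble0 dle0 _ _] := cartan_data_signs.
by move/(finite_type_case_finite ale0 ble0 dle0)/finite_types_alternating.
Qed.

Lemma finite_of_case : case1 C x y \/ case2 C x y -> finite_root_system R.
Proof.
move=> h; have [|m] := finite_type_alternating; last exact: finite_of_alternating.
by apply/cases_finite_type; case: h; auto.
Qed.

Lemma case1_roots : case1 C x y ->
  (forall w, R x w <-> usual_roots (C x) w) /\ (forall w, R y w <-> usual_roots (C x) w).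
Proof.
move=> h1; have [|m ok] := finite_type_alternating; first by apply/cases_finite_type; left.
have Cx a : C a = C x by case: (hA a) => ->; last case: h1.
suff roots a v : R a v <-> usual_roots (C x) v by split; apply: roots.
split; last exact (root_of_usual_root hR a (rhoK hC) Cx).
have [o ->] := obj_surj a.
have pos u : R (obj o) u -> nonneg u -> usual_roots (C x) u.
  move=> hu nu; rewrite -[u]coordsK.
  apply: (word_roots_usual (rho := rho) (t := obj o) (w := alternating m) Cx).
    by move=> i; exact (cartan_diag hC x i).
  rewrite (word_roots_morph rho_obj cartan_obj).
  by apply/(positive_roots_alternating _ _ ok); rewrite coordsK -nonneg_coords.
move=> hv; case: (root_sign hR hv) => nv; first exact: pos.
rewrite -[v]opprK; apply: usual_roots_opp (cartan_diag hC x) _.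
exact: pos (root_opp hR hv) nv.
Qed.

Lemma pos_roots_are_alternating m o s : alternating_roots_ok cx12 cx21 cy21 m ->
  perm_eq (word_roots rho2 model o (alternating m)) (map coords s) ->
  pos_roots_are R (obj o) s.
Proof.
move=> ok perm v; rewrite -(mem_map coords_inj) -(perm_mem perm).
by rewrite -(positive_roots_alternating _ _ ok) coordsK nonneg_coords.
Qed.

Lemma case2_roots_4 : case2 C x y -> cy21 = -4 ->
  pos_roots_are R x Rx4 /\ pos_roots_are R y Ry4.
Proof.
case=> a1 _ b3 _ d4; have ok : alternating_roots_ok cx12 cx21 cy21 8.
  by rewrite a1 b3 d4; vm_compute.
split; [apply: (pos_roots_are_alternating (o := false) ok)
       | apply: (pos_roots_are_alternating (o := true) ok)];
  by rewrite a1 b3 d4 /Rx4 /Ry4 /= !coords_r12; vm_compute.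
Qed.

Lemma case2_roots_5 : case2 C x y -> cy21 = -5 ->
  pos_roots_are R x Rx5 /\ pos_roots_are R y Ry5.
Proof.
case=> a1 _ b3 _ d5; have ok : alternating_roots_ok cx12 cx21 cy21 12.
  by rewrite a1 b3 d5; vm_compute.
split; [apply: (pos_roots_are_alternating (o := false) ok)
       | apply: (pos_roots_are_alternating (o := true) ok)];
  by rewrite a1 b3 d5 /Rx5 /Ry5 /= !coords_r12; vm_compute.
Qed.

End TwoObjects.

Theorem proposition5p1 (A : Type) (x y : A) (hxy : x <> y)
  (hA : forall a : A, a = x \/ a = y)
  (rho : 'I_2 -> A -> A) (C : A -> 'I_2 -> 'I_2 -> int)
  (R : A -> zvec 'I_2 -> Prop)
  (hC : cartan_scheme rho C)
  (hrx : rho i1 x = y) (hry : rho i1 y = x) (hr2 : forall a, rho i2 a = a)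
  (hR : root_system rho C R) :
  (finite_root_system R <->
     exists2 uv : A * A, (uv = (x, y) \/ uv = (y, x)) &
       (case1 C uv.1 uv.2 \/ case2 C uv.1 uv.2))
  /\ (forall u v : A, (u = x /\ v = y) \/ (u = y /\ v = x) ->
        (case1 C u v ->
           (forall w, R u w <-> usual_roots (C u) w) /\
           (forall w, R v w <-> usual_roots (C u) w))
        /\ (case2 C u v -> C v i2 i1 = -4 ->
              pos_roots_are R u Rx4 /\ pos_roots_are R v Ry4)
        /\ (case2 C u v -> C v i2 i1 = -5 ->
              pos_roots_are R u Rx5 /\ pos_roots_are R v Ry5)).
Proof.
have orient u v : (u = x /\ v = y) \/ (u = y /\ v = x) ->
    [/\ forall a, a = u \/ a = v, rho i1 u = v & rho i1 v = u].
  by case=> -[-> ->]; split=> // a; case: (hA a); auto.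
split; [split|].
- move/(finite_cases hxy hC hrx hry hr2 hR) => [h|[h|h]].
  + by exists (x, y); [left | left].
  + by exists (x, y); [left | right].
  + by exists (y, x); [right | right].
- case=> -[u v] /= huv hcase.
  have /orient [huv' hu hv] : (u = x /\ v = y) \/ (u = y /\ v = x).
    by case: huv => -[-> ->]; auto.
  exact: finite_of_case huv' hC hu hv hr2 hR hcase.
move=> u v /orient [huv hu hv]; split; [|split].
- exact: case1_roots huv hC hu hv hr2 hR.
- exact: case2_roots_4 hC hu hv hr2 hR.
- exact: case2_roots_5 hC hu hv hr2 hR.
Qed.
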